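(* Let $k$ be an algebraically closed field of characteristic $2$, $f = x^2+y^2z+yz^2$, $m \geq 5$, $R_m = k[x_0,\dots,x_m,y_0,\dots,y_m,z_0,\dots,z_m]$, and $(\mathbb{A}^3)_m = \mathrm{Spec}\, R_m$. Define $f^{(j)}\in R_m$ ($0\le j\le m$) by $f(\sum_{i=0}^m x_it^i,\sum_{i=0}^m y_it^i,\sum_{i=0}^m z_it^i) = \sum_{j=0}^m f^{(j)}t^j$ in $R_m[t]/\langle t^{m+1}\rangle$. Define the ideals $I_m^0 = \langle x_0,x_1,x_2,y_0,y_1,z_0,z_1\rangle + \langle f^{(0)},\dots,f^{(m)}\rangle$, $I_m^1 = J_m^1 (R_m)_{z_1}\cap R_m$, $I_m^2 = J_m^2 (R_m)_{y_1}\cap R_m$, $I_m^3 = J_m^3 (R_m)_{y_1}\cap R_m$, where $J_m^1 = \langle x_0,x_1,y_0,y_1,z_0\rangle + \langle f^{(0)},\dots,f^{(m)}\rangle$, $J_m^2 = \langle x_0,x_1,y_0,z_0,z_1\rangle + \langle f^{(0)},\dots,f^{(m)}\rangle$, $J_m^3 = \langle x_0,x_1,y_0,z_0,y_1+z_1\rangle + \langle f^{(0)},\dots,f^{(m)}\rangle$, and let $Z_m^i = \mathbf{V}(I_m^i)\subseteq (\mathbb{A}^3)_m$ for $i=0,1,2,3$. Let $\psi_1,\psi_2$ be the automorphisms of $(\mathbb{A}^3)_m$ corresponding to the $k$-algebra automorphisms $\varphi_1,\varphi_2$ of $R_m$ given by $\varphi_1: x_i\mapsto x_i,\ y_i\mapsto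 z_i,\ z_i\mapsto y_i$ and $\varphi_2: x_i\mapsto x_i,\ y_i\mapsto y_i,\ z_i\mapsto y_i+z_i$ (for all $i$). Then (1) $\psi_1(Z_m^0)=Z_m^0$, $\psi_1(Z_m^1)=Z_m^2$, $\psi_1(Z_m^2)=Z_m^1$, $\psi_1(Z_m^3)=Z_m^3$; (2) $\psi_2(Z_m^0)=Z_m^0$, $\psi_2(Z_m^1)=Z_m^1$, $\psi_2(Z_m^2)=Z_m^3$, $\psi_2(Z_m^3)=Z_m^2$.
   Context: $(R_m)_h$ is the localization of $R_m$ at powers of $h$, and $J\cdot(R_m)_h\cap R_m$ denotes the preimage in $R_m$ of the extended ideal. $\mathbf{V}(I)$ is the zero set of the ideal $I$ in $(\mathbb{A}^3)_m$. *)

From HB Require Import structures.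
From mathcomp Require Import all_boot all_order all_algebra.
From mathcomp Require Import mpoly.
Set Implicit Arguments. Unset Strict Implicit. Unset Printing Implicit Defensive.
Import Order.TTheory GRing.Theory.
Local Open Scope ring_scope.

(* R_m = k[x_0..x_m, y_0..y_m, z_0..z_m] is {mpoly k[(3*m).+3]};
   variable index i <-> x_i, m.+1 + i <-> y_i, 2*m.+1 + i <-> z_i. *)
Notation Rm k m := {mpoly k[(3 * m).+3]}.

Section Jets.
Variables (k : comNzRingType) (m : nat).

Definition xv (i : nat) : Rm k m := 'X_(inord i).
Definition yv (i : nat) : Rm k m := 'X_(inord (m.+1 + i)).
Definition zv (i : nat) : Rm k m := 'X_(inord (2 * m.+1 + i)).

Definition Xt : {poly Rm k m} := \sum_(i < m.+1) xv i *: 'X^i.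
Definition Yt : {poly Rm k m} := \sum_(i < m.+1) yv i *: 'X^i.
Definition Zt : {poly Rm k m} := \sum_(i < m.+1) zv i *: 'X^i.

Definition fT : {poly Rm k m} := Xt ^+ 2 + Yt ^+ 2 * Zt + Yt * Zt ^+ 2.

(* f^{(j)} : coefficient of t^j (j <= m; unaffected by truncation mod t^{m+1}) *)
Definition fj (j : nat) : Rm k m := fT`_j.

Definition fgens (g : Rm k m) : Prop := exists2 j : nat, (j <= m)%N & g = fj j.

Definition phi1_var (a : 'I_((3 * m).+3)) : Rm k m :=
  let b := (a %/ m.+1)%N in let i := (a %% m.+1)%N in
  if b == 0%N then xv i else if b == 1%N then zv i else yv i.
Definition phi2_var (a : 'I_((3 * m).+3)) : Rm k m :=
  let b := (a %/ m.+1)%N in let i := (a %% m.+1)%N in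
  if b == 0%N then xv i else if b == 1%N then yv i else yv i + zv i.

Definition phi1 (p : Rm k m) : Rm k m := comp_mpoly (mktuple phi1_var) p.
Definition phi2 (p : Rm k m) : Rm k m := comp_mpoly (mktuple phi2_var) p.

End Jets.

Section Ideals.
Variable R : comNzRingType.

Definition gen_ideal (S : R -> Prop) : R -> Prop :=
  fun g => exists n (a c : 'I_n -> R),
    (forall i, S (a i)) /\ g = \sum_(i < n) c i * a i.

(* J (R)_h \cap R, i.e. {g | g/1 \in J R_h} = {g | exists n, h^n g \in J} *)
Definition contr_loc (J : R -> Prop) (h : R) : R -> Prop :=
  fun g => exists n : nat, J (h ^+ n * g).

Definition prime_ideal (P : R -> Prop) : Prop :=
  [/\ P 0, (forall a b, P a -> P b -> P (a + b)),
      (forall r a, P a -> P (r * a)), ~ P 1 &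
      (forall a b, P (a * b) -> P a \/ P b)].

(* points of Spec R are prime ideals; V(I) is the set of primes containing I *)
Definition zero_set (I : R -> Prop) : (R -> Prop) -> Prop :=
  fun P => prime_ideal P /\ (forall g, I g -> P g).

(* image of a set of points of Spec R under Spec(phi), P |-> phi^{-1}(P) *)
Definition spec_image (phi : R -> R) (Z : (R -> Prop) -> Prop)
  : (R -> Prop) -> Prop :=
  fun Q => exists2 P, Z P & Q = (fun g => P (phi g)).

End Ideals.

Section TheIdeals.
Variables (k : comNzRingType) (m : nat).
Local Notation x := (@xv k m). Local Notation y := (@yv k m).
Local Notation z := (@zv k m).

Definition I0 : Rm k m -> Prop := gen_ideal (fun g =>
  g = x 0 \/ g = x 1 \/ g = x 2 \/ g = y 0 \/ g = y 1 \/ g = z 0 \/ g = z 1 \/ fgens g).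
Definition J1 : Rm k m -> Prop := gen_ideal (fun g =>
  g = x 0 \/ g = x 1 \/ g = y 0 \/ g = y 1 \/ g = z 0 \/ fgens g).
Definition J2 : Rm k m -> Prop := gen_ideal (fun g =>
  g = x 0 \/ g = x 1 \/ g = y 0 \/ g = z 0 \/ g = z 1 \/ fgens g).
Definition J3 : Rm k m -> Prop := gen_ideal (fun g =>
  g = x 0 \/ g = x 1 \/ g = y 0 \/ g = z 0 \/ g = y 1 + z 1 \/ fgens g).

Definition I1 := contr_loc J1 (z 1).
Definition I2 := contr_loc J2 (y 1).
Definition I3 := contr_loc J3 (y 1).

Definition Z0 := zero_set I0.
Definition Z1 := zero_set I1.
Definition Z2 := zero_set I2.
Definition Z3 := zero_set I3.
End TheIdeals.

From HB Require Import structures.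
From mathcomp Require Import all_boot all_order all_algebra.
From mathcomp Require Import mpoly.
From mathcomp Require Import zify ring.
From Stdlib Require Import FunctionalExtensionality PropExtensionality.
Set Implicit Arguments. Unset Strict Implicit. Unset Printing Implicit Defensive.
Local Open Scope ring_scope.
Import GRing.Theory.

(* phi_1 and phi_2 are involutive k-algebra automorphisms of R_m (phi_2 because
   2 = 0 in k) that fix every f^(j): f is symmetric in y and z, and
   f(x, y, y + z) = f(x, y, z) + 2 (y^3 + y^2 z).  On the remaining generators
   they act as permutations up to sums of generators, so phi_1 maps J^1, J^2,
   J^3 to J^2, J^1, J^3 and phi_2 maps them to J^1, J^3, J^2, sending the
   localised element to the new one modulo the target ideal.  Pulling prime
   ideals back along an involution then identifies the zero sets. *)

Section Ideals.
Variable R : comNzRingType.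
Implicit Types (S : R -> Prop) (f : {rmorphism R -> R}).

Lemma gen_ideal0 S : gen_ideal S 0.
Proof. by exists 0%N, (fun=> 0), (fun=> 0); split => [[]|]; rewrite ?big_ord0. Qed.

Lemma mem_gen_ideal S g : S g -> gen_ideal S g.
Proof. by move=> Sg; exists 1%N, (fun=> g), (fun=> 1); rewrite big_ord1 mul1r. Qed.

Lemma gen_idealMl S r g : gen_ideal S g -> gen_ideal S (r * g).
Proof.
move=> [n [a [c [Sa ->]]]]; exists n, a, (fun i => r * c i); split => //.
by rewrite mulr_sumr; apply: eq_bigr => i _; rewrite mulrA.
Qed.

Lemma gen_idealN S g : gen_ideal S g -> gen_ideal S (- g).
Proof. by rewrite -mulN1r; apply: gen_idealMl. Qed.

Lemma gen_idealD S g h : gen_ideal S g -> gen_ideal S h -> gen_ideal S (g + h).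
Proof.
move=> [n1 [a1 [c1 [Sa1 ->]]]] [n2 [a2 [c2 [Sa2 ->]]]].
pose glue T (u : 'I_n1 -> T) (v : 'I_n2 -> T) i :=
  match split i with inl j => u j | inr j => v j end.
exists (n1 + n2)%N, (glue _ a1 a2), (glue _ c1 c2); split.
  by move=> i; rewrite /glue; case: (split i).
rewrite big_split_ord; congr (_ + _); apply: eq_bigr => i _.
  by rewrite /glue (unsplitK (inl i)).
by rewrite /glue (unsplitK (inr i)).
Qed.

Lemma gen_ideal_map f S S' :
  (forall a, S a -> gen_ideal S' (f a)) ->
  forall g, gen_ideal S g -> gen_ideal S' (f g).
Proof.
move=> fS g [n [a [c [Sa ->]]]]; rewrite rmorph_sum.
apply: (big_ind (gen_ideal S')); [exact: gen_ideal0 | exact: gen_idealD |].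
by move=> i _; rewrite rmorphM; apply/gen_idealMl/fS/Sa.
Qed.

Lemma prime_ideal_preim f P : prime_ideal P -> prime_ideal (fun g => P (f g)).
Proof.
case=> P0 PD PM P1 Pprime; split.
- by rewrite rmorph0.
- by move=> a b Pa Pb; rewrite rmorphD; apply: PD.
- by move=> r a Pa; rewrite rmorphM; apply: PM.
- by rewrite rmorph1.
- by move=> a b; rewrite rmorphM; apply: Pprime.
Qed.

Lemma spec_image_zero_set f (I I' : R -> Prop) : involutive f ->
  (forall g, I g -> I' (f g)) -> (forall g, I' g -> I (f g)) ->
  spec_image f (zero_set I) = zero_set I'.
Proof.
move=> fK II' I'I; apply: functional_extensionality => Q.
apply: propositional_extensionality; split.
- move=> [P [Pprime PI] ->]; split; first exact: prime_ideal_preim.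
  by move=> g /I'I /PI.
- move=> [Qprime QI']; exists (fun g => Q (f g)).
    by split; [exact: prime_ideal_preim | move=> g /II' /QI'].
  by apply: functional_extensionality => g; rewrite fK.
Qed.

(* h'^n - (f h)^n is a multiple of h' - f h, which lies in the target ideal. *)
Lemma contr_loc_map f S S' h h' :
  (forall g, gen_ideal S g -> gen_ideal S' (f g)) -> gen_ideal S' (f h - h') ->
  forall g, contr_loc (gen_ideal S) h g -> contr_loc (gen_ideal S') h' (f g).
Proof.
move=> SS' Sh' g [n Sg]; exists n.
have := SS' _ Sg; rewrite rmorphM rmorphXn => S'g.
have -> : h' ^+ n * f g = (f h) ^+ n * f g - ((f h) ^+ n - h' ^+ n) * f g by ring.
apply: gen_idealD => //; apply: gen_idealN.
by rewrite subrXX mulrC mulrA mulrC; do 2!apply: gen_idealMl.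
Qed.

End Ideals.

Section CompMpoly.
Variables (k : comNzRingType) (n : nat).
Implicit Types (p : {mpoly k[n]}) (lq : n.-tuple {mpoly k[n]}).

Lemma comp_mpoly_comp lq lq' p :
  comp_mpoly lq' (comp_mpoly lq p) =
  comp_mpoly [tuple comp_mpoly lq' (tnth lq i) | i < n] p.
Proof.
rewrite [comp_mpoly lq p]comp_mpolyEX [RHS]comp_mpolyEX raddf_sum /=.
apply: eq_bigr => e _; rewrite comp_mpolyZ !comp_mpolyX rmorph_prod.
by congr (_ *: _); apply: eq_bigr => i _; rewrite rmorphXn tnth_mktuple.
Qed.

Lemma comp_mpoly_involutive lq :
  (forall i, comp_mpoly lq (tnth lq i) = 'X_i) -> involutive (comp_mpoly lq).
Proof.
move=> lqK p; rewrite comp_mpoly_comp -[RHS]comp_mpoly_id; congr comp_mpoly.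
by apply: eq_from_tnth => i; rewrite !tnth_mktuple lqK.
Qed.

Lemma comp_mpoly_mktupleX (F : 'I_n -> {mpoly k[n]}) i :
  comp_mpoly (mktuple F) 'X_i = F i.
Proof. by rewrite comp_mpolyXU -tnth_nth tnth_mktuple. Qed.

Lemma pchar_mpoly (p : nat) :
  (p \in [pchar k])%N -> (p \in [pchar {mpoly k[n]}])%N.
Proof. exact: (rmorph_pchar (@mpolyC n k)). Qed.

End CompMpoly.

Lemma map_poly_sumZXn (R S : nzRingType) (f : {rmorphism R -> S}) n
    (c : nat -> R) :
  map_poly f (\sum_(i < n) c i *: 'X^i) = \sum_(i < n) f (c i) *: 'X^i.
Proof.
by rewrite rmorph_sum; apply: eq_bigr => i _; rewrite /= map_polyZ map_polyXn.
Qed.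

Section Jets.
Variables (k : comNzRingType) (m : nat).
Local Notation x := (@xv k m). Local Notation y := (@yv k m).
Local Notation z := (@zv k m).
Local Notation phi1 := (@phi1 k m). Local Notation phi2 := (@phi2 k m).

HB.instance Definition _ :=
  GRing.RMorphism.copy phi1 (comp_mpoly (mktuple (@phi1_var k m))).
HB.instance Definition _ :=
  GRing.RMorphism.copy phi2 (comp_mpoly (mktuple (@phi2_var k m))).

Lemma block_divmod b i :
  (i <= m)%N -> ((b * m.+1 + i) %/ m.+1 = b /\ (b * m.+1 + i) %% m.+1 = i)%N.
Proof.
by move=> le_im; rewrite divnMDl // modnMDl divn_small ?modn_small ?addn0.
Qed.

Lemma xv_block i : (i <= m)%N ->
  ((@inord (3 * m).+2 i) %/ m.+1 = 0 /\ (@inord (3 * m).+2 i) %% m.+1 = i)%N.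
Proof.
move=> le_im; rewrite inordK; last lia.
by have := block_divmod 0 le_im; rewrite add0n.
Qed.

Lemma yv_block i : (i <= m)%N ->
  ((@inord (3 * m).+2 (m.+1 + i)) %/ m.+1 = 1 /\
   (@inord (3 * m).+2 (m.+1 + i)) %% m.+1 = i)%N.
Proof.
move=> le_im; rewrite inordK; last lia.
by have := block_divmod 1 le_im; rewrite mul1n.
Qed.

Lemma zv_block i : (i <= m)%N ->
  ((@inord (3 * m).+2 (2 * m.+1 + i)) %/ m.+1 = 2 /\
   (@inord (3 * m).+2 (2 * m.+1 + i)) %% m.+1 = i)%N.
Proof. by move=> le_im; rewrite inordK; [exact: block_divmod | lia]. Qed.

Lemma jet_var_cases (a : 'I_((3 * m).+3)) (i := (a %% m.+1)%N) :
  [\/ (a %/ m.+1 = 0)%N /\ 'X_a = x i, (a %/ m.+1 = 1)%N /\ 'X_a = y i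
    | (a %/ m.+1 = 2)%N /\ 'X_a = z i].
Proof.
have lt_b3 : (a %/ m.+1 < 3)%N by rewrite ltn_divLR //; have := ltn_ord a; lia.
have -> : 'X_a = 'X_(inord (a %/ m.+1 * m.+1 + i)) :> Rm k m.
  by congr 'X_(_); apply: val_inj; rewrite /= inordK /i -?divn_eq.
rewrite /xv /yv /zv; case: (a %/ m.+1)%N lt_b3 => [|[|[|b]]] // _.
- by constructor 1.
- by constructor 2; rewrite mul1n.
- by constructor 3.
Qed.

Lemma phi1X a : phi1 'X_a = @phi1_var k m a.
Proof. exact: comp_mpoly_mktupleX. Qed.
Lemma phi2X a : phi2 'X_a = @phi2_var k m a.
Proof. exact: comp_mpoly_mktupleX. Qed.

Lemma phi1_xv i : (i <= m)%N -> phi1 (x i) = x i.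
Proof. by move=> /xv_block[ab ai]; rewrite phi1X /phi1_var ab ai. Qed.
Lemma phi1_yv i : (i <= m)%N -> phi1 (y i) = z i.
Proof. by move=> /yv_block[ab ai]; rewrite phi1X /phi1_var ab ai. Qed.
Lemma phi1_zv i : (i <= m)%N -> phi1 (z i) = y i.
Proof. by move=> /zv_block[ab ai]; rewrite phi1X /phi1_var ab ai. Qed.
Lemma phi2_xv i : (i <= m)%N -> phi2 (x i) = x i.
Proof. by move=> /xv_block[ab ai]; rewrite phi2X /phi2_var ab ai. Qed.
Lemma phi2_yv i : (i <= m)%N -> phi2 (y i) = y i.
Proof. by move=> /yv_block[ab ai]; rewrite phi2X /phi2_var ab ai. Qed.
Lemma phi2_zv i : (i <= m)%N -> phi2 (z i) = y i + z i.
Proof. by move=> /zv_block[ab ai]; rewrite phi2X /phi2_var ab ai. Qed.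

Lemma phi1K : involutive phi1.
Proof.
apply: comp_mpoly_involutive => a; rewrite tnth_mktuple.
have le_im : (a %% m.+1 <= m)%N by rewrite -ltnS ltn_pmod.
rewrite /phi1_var; case: (jet_var_cases a) => -[-> ->].
- exact: phi1_xv.
- exact: phi1_zv.
- exact: phi1_yv.
Qed.

Lemma phi1_yzv i : (i <= m)%N -> phi1 (y i + z i) = y i + z i.
Proof. by move=> le_im; rewrite rmorphD /= phi1_yv // phi1_zv // addrC. Qed.

Lemma map_phi1_Xt : map_poly phi1 (Xt k m) = Xt k m.
Proof.
by rewrite map_poly_sumZXn; apply: eq_bigr => i _; rewrite /= phi1_xv // -ltnS.
Qed.
Lemma map_phi1_Yt : map_poly phi1 (Yt k m) = Zt k m.
Proof.
by rewrite map_poly_sumZXn; apply: eq_bigr => i _; rewrite /= phi1_yv // -ltnS.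
Qed.
Lemma map_phi1_Zt : map_poly phi1 (Zt k m) = Yt k m.
Proof.
by rewrite map_poly_sumZXn; apply: eq_bigr => i _; rewrite /= phi1_zv // -ltnS.
Qed.

Lemma phi1_fj j : phi1 (fj k m j) = fj k m j.
Proof.
rewrite /fj -coef_map /fT !rmorphD !rmorphM /=.
by rewrite map_phi1_Xt map_phi1_Yt map_phi1_Zt; apply: (congr1 (coefp j)); ring.
Qed.

Section Char2.
Hypothesis pchar2 : (2 \in [pchar k])%N.

Let pchar2_Rm : (2 \in [pchar Rm k m])%N := pchar_mpoly _ pchar2.

Lemma phi2_yzv i : (i <= m)%N -> phi2 (y i + z i) = z i.
Proof.
by move=> le_im; rewrite rmorphD /= phi2_yv // phi2_zv // addKr_pchar2.
Qed.

Lemma phi2K : involutive phi2.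
Proof.
apply: comp_mpoly_involutive => a; rewrite tnth_mktuple.
have le_im : (a %% m.+1 <= m)%N by rewrite -ltnS ltn_pmod.
rewrite /phi2_var; case: (jet_var_cases a) => -[-> ->].
- exact: phi2_xv.
- exact: phi2_yv.
- exact: phi2_yzv.
Qed.

Lemma map_phi2_Xt : map_poly phi2 (Xt k m) = Xt k m.
Proof.
by rewrite map_poly_sumZXn; apply: eq_bigr => i _; rewrite /= phi2_xv // -ltnS.
Qed.
Lemma map_phi2_Yt : map_poly phi2 (Yt k m) = Yt k m.
Proof.
by rewrite map_poly_sumZXn; apply: eq_bigr => i _; rewrite /= phi2_yv // -ltnS.
Qed.
Lemma map_phi2_Zt : map_poly phi2 (Zt k m) = Yt k m + Zt k m.
Proof.
rewrite map_poly_sumZXn -big_split; apply: eq_bigr => i _.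
by rewrite /= phi2_zv ?scalerDl // -ltnS.
Qed.

Lemma phi2_fj j : phi2 (fj k m j) = fj k m j.
Proof.
rewrite /fj -coef_map /fT !rmorphD !rmorphM /=.
rewrite map_phi2_Xt map_phi2_Yt map_phi2_Zt; apply: (congr1 (coefp j)).
set X := Xt k m; set Y := Yt k m; set Z := Zt k m.
have pchar2_poly : (2 \in [pchar {poly Rm k m}])%N :=
  rmorph_pchar polyC pchar2_Rm.
rewrite -[RHS]addr0 -(mulrn_pchar pchar2_poly (Y ^+ 3 + Y ^+ 2 * Z)); ring.
Qed.

End Char2.

End Jets.

Section GeneratorImages.
Variables (k : comNzRingType) (m : nat).
Hypotheses (pchar2 : (2 \in [pchar k])%N) (le2m : (2 <= m)%N).
Local Notation x := (@xv k m). Local Notation y := (@yv k m).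
Local Notation z := (@zv k m).
Local Notation phi1 := (@phi1 k m). Local Notation phi2 := (@phi2 k m).

Let le1m : (1 <= m)%N := ltnW le2m.
Let pchar2_Rm : (2 \in [pchar Rm k m])%N := pchar_mpoly _ pchar2.

Ltac ideal_generator :=
  apply: mem_gen_ideal; do ?[by left | right]; by eexists; last reflexivity.
Ltac ideal_member := first [ideal_generator | apply: gen_idealD; ideal_generator].

(* x ?i also matches y j and z j (all are 'X_(inord _)), so it is tried last. *)
Ltac phi1_simpl := rewrite /= ?phi1_yzv ?phi1_zv ?phi1_yv ?phi1_xv ?phi1_fj //.
Ltac phi2_simpl := rewrite /= ?phi2_yzv ?phi2_zv ?phi2_yv ?phi2_xv ?phi2_fj //.

Lemma phi1_I0I0 g : I0 g -> I0 (phi1 g).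
Proof.
apply: gen_ideal_map => _ [->|[->|[->|[->|[->|[->|[->|[j le_jm ->]]]]]]]];
  phi1_simpl; ideal_member.
Qed.

Lemma phi1_J1J2 g : J1 g -> J2 (phi1 g).
Proof.
apply: gen_ideal_map => _ [->|[->|[->|[->|[->|[j le_jm ->]]]]]];
  phi1_simpl; ideal_member.
Qed.

Lemma phi1_J2J1 g : J2 g -> J1 (phi1 g).
Proof.
apply: gen_ideal_map => _ [->|[->|[->|[->|[->|[j le_jm ->]]]]]];
  phi1_simpl; ideal_member.
Qed.

Lemma phi1_J3J3 g : J3 g -> J3 (phi1 g).
Proof.
apply: gen_ideal_map => _ [->|[->|[->|[->|[->|[j le_jm ->]]]]]];
  phi1_simpl; ideal_member.
Qed.

Lemma phi2_I0I0 g : I0 g -> I0 (phi2 g).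
Proof.
apply: gen_ideal_map => _ [->|[->|[->|[->|[->|[->|[->|[j le_jm ->]]]]]]]];
  phi2_simpl; ideal_member.
Qed.

Lemma phi2_J1J1 g : J1 g -> J1 (phi2 g).
Proof.
apply: gen_ideal_map => _ [->|[->|[->|[->|[->|[j le_jm ->]]]]]];
  phi2_simpl; ideal_member.
Qed.

Lemma phi2_J2J3 g : J2 g -> J3 (phi2 g).
Proof.
apply: gen_ideal_map => _ [->|[->|[->|[->|[->|[j le_jm ->]]]]]];
  phi2_simpl; ideal_member.
Qed.

Lemma phi2_J3J2 g : J3 g -> J2 (phi2 g).
Proof.
apply: gen_ideal_map => _ [->|[->|[->|[->|[->|[j le_jm ->]]]]]];
  phi2_simpl; ideal_member.
Qed.

Lemma phi1_I1I2 g : I1 g -> I2 (phi1 g).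
Proof.
apply: contr_loc_map; first exact: phi1_J1J2.
by rewrite /= phi1_zv // subrr; apply: gen_ideal0.
Qed.

Lemma phi1_I2I1 g : I2 g -> I1 (phi1 g).
Proof.
apply: contr_loc_map; first exact: phi1_J2J1.
by rewrite /= phi1_yv // subrr; apply: gen_ideal0.
Qed.

Lemma phi1_I3I3 g : I3 g -> I3 (phi1 g).
Proof.
apply: contr_loc_map; first exact: phi1_J3J3.
by rewrite /= phi1_yv // oppr_pchar2 // addrC; ideal_member.
Qed.

Lemma phi2_I1I1 g : I1 g -> I1 (phi2 g).
Proof.
apply: contr_loc_map; first exact: phi2_J1J1.
by rewrite /= phi2_zv // addrK; ideal_member.
Qed.

Lemma phi2_I2I3 g : I2 g -> I3 (phi2 g).
Proof.
apply: contr_loc_map; first exact: phi2_J2J3.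
by rewrite /= phi2_yv // subrr; apply: gen_ideal0.
Qed.

Lemma phi2_I3I2 g : I3 g -> I2 (phi2 g).
Proof.
apply: contr_loc_map; first exact: phi2_J3J2.
by rewrite /= phi2_yv // subrr; apply: gen_ideal0.
Qed.

End GeneratorImages.

Unset Implicit Arguments. Set Strict Implicit.
Theorem lemma3p5 (k : closedFieldType) (hchar : 2%N \in [pchar k])
  (m : nat) (hm : (5 <= m)%N) :
  let psi1 := spec_image (@phi1 k m) in
  let psi2 := spec_image (@phi2 k m) in
  (psi1 (@Z0 k m) = @Z0 k m /\ psi1 (@Z1 k m) = @Z2 k m /\
   psi1 (@Z2 k m) = @Z1 k m /\ psi1 (@Z3 k m) = @Z3 k m) /\
  (psi2 (@Z0 k m) = @Z0 k m /\ psi2 (@Z1 k m) = @Z1 k m /\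
   psi2 (@Z2 k m) = @Z3 k m /\ psi2 (@Z3 k m) = @Z2 k m).
Proof.
have le2m : (2 <= m)%N by apply: leq_trans hm.
have phi1K := @phi1K k m; have phi2K := @phi2K k m hchar.
split; (split; [|split; [|split]]).
- by apply: spec_image_zero_set => //; exact: phi1_I0I0.
- by apply: spec_image_zero_set => //; [exact: phi1_I1I2 | exact: phi1_I2I1].
- by apply: spec_image_zero_set => //; [exact: phi1_I2I1 | exact: phi1_I1I2].
- by apply: spec_image_zero_set => //; exact: phi1_I3I3.
- by apply: spec_image_zero_set => //; exact: phi2_I0I0.
- by apply: spec_image_zero_set => //; exact: phi2_I1I1.
- by apply: spec_image_zero_set => //; [exact: phi2_I2I3 | exact: phi2_I3I2].
- by apply: spec_image_zero_set => //; [exact: phi2_I3I2 | exact: phi2_I2I3].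
Qed.
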